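(* Let $T\in[0,\infty]$. For every $\pi\in\Pi$ with $J_T(\pi)<\infty$ and every $\delta_{\mathrm{tol}}>0$ there exists a periodic strategy $\hat\pi\in\Pi$ such that $$J_T(\hat\pi)\le J_T(\pi)+\delta_{\mathrm{tol}}.$$
   Context: Let $G=(V,E,A,\phi)$ be a finite connected undirected graph with node set $V$, edge set $E$, edge lengths $A:E\to\mathbb{R}_{>0}$ and node weights $\phi:V\to\mathbb{R}_{>0}$. Let $|G|$ be its metric graph (each edge $e$ a closed interval of length $A(e)$ glued at its endpoints) with shortest-path metric $d$. Fix $k\ge1$ robots $r_1,\dots,r_k$; $d_k(p,p')=\max_i d(p_i,p'_i)$ on $|G|^k$. Feasible strategies: $\Pi=\{\pi\in C([0,\infty),|G|^k):\ d_k(\pi(t),\pi(t'))\le|t-t'|\ \forall t,t'\ge0\}$, $\pi=(\pi_{r_1},\dots,\pi_{r_k})$. A strategy $\pi$ is periodic if there exist $t^*\ge0$ and $0<W<\infty$ with $\pi(t^*+t+W)=\pi(t^*+t)$ for all $t\ge0$. For $v\in V$, $t\ge0$: $\tau^\pi(v,t)=\sup\{t'\le t:\pi_r(t')=v\text{ for some }r\}$ if nonempty, else $0$; $L^\pi_v(t)=t-\tau^\pi(v,t)$; $M^\pi(t)=\max_v\phi(v)L^\pi_v(t)$. For finite $T\ge0$, $J_T(\pi)=\sup_{t\ge T}M^\pi(t)$; $J_\infty(\pi)=\limsup_{t\to\infty}M^\pi(t)$. *)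

From Stdlib Require Import Reals ClassicalEpsilon.
From mathcomp Require Import ssreflect ssrbool eqtype choice fintype seq.
From Coquelicot Require Import Coquelicot.

Set Implicit Arguments.
Unset Strict Implicit.
Local Open Scope R_scope.

Section MetricGraph.

(* A finite undirected (multi)graph: each edge e joins [src e] and [dst e]. *)
Variables (V E : finType) (src dst : E -> V) (A : E -> R).

Fixpoint is_walk (x y : V) (w : list E) : Prop :=
  match w with
  | nil => x = y
  | e :: w' => (src e = x /\ is_walk (dst e) y w') \/
               (dst e = x /\ is_walk (src e) y w')
  end.

Fixpoint walk_length (w : list E) : R :=
  match w with nil => 0 | e :: w' => A e + walk_length w' end.

Definition connected_graph : Prop := forall u v : V, exists w, is_walk u v w.

(* Points of the metric graph |G|: a node, or an interior point of an edge e
   at distance s from src e (0 < s < A e).  Edge endpoints are the nodes. *)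
Inductive point : Type :=
  | PNode (v : V)
  | PEdge (e : E) (s : R) (Hs : 0 < s < A e).

Definition ends (p : point) : list (V * R) :=
  match p with
  | PNode v => (v, 0) :: nil
  | PEdge e s _ => (src e, s) :: (dst e, A e - s) :: nil
  end.

(* Lengths of the (canonical) routes between two points of |G|:
   either directly along a common edge, or leaving p through an endpoint,
   following a walk of the graph, and entering q through an endpoint. *)
Definition route_length (p q : point) (l : R) : Prop :=
  (exists e s s' Hs Hs', p = @PEdge e s Hs /\ q = @PEdge e s' Hs' /\ l = Rabs (s - s'))
  \/ (exists x a y b w, List.In (x, a) (ends p) /\ List.In (y, b) (ends q) /\
        is_walk x y w /\ l = a + walk_length w + b).

Definition dist (p q : point) : R := real (Glb_Rbar (route_length p q)).

(* Robots are indexed by i < k; a configuration is a map nat -> point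
   (only the indices i < k are meaningful). *)
Definition config := nat -> point.

Definition dk (k : nat) (p q : config) : R :=
  List.fold_right Rmax 0 (List.map (fun i => dist (p i) (q i)) (List.seq 0 k)).

Definition feasible (k : nat) (pi : R -> config) : Prop :=
  (forall t, 0 <= t -> forall eps, 0 < eps -> exists del, 0 < del /\
     forall t', 0 <= t' -> Rabs (t' - t) < del -> dk k (pi t) (pi t') < eps) /\
  (forall t t', 0 <= t -> 0 <= t' -> dk k (pi t) (pi t') <= Rabs (t - t')).

Definition periodic (k : nat) (pi : R -> config) : Prop :=
  exists tstar W, 0 <= tstar /\ 0 < W /\
    forall t, 0 <= t -> forall i, Nat.lt i k ->
      pi (tstar + t + W) i = pi (tstar + t) i.

Definition visit_times (k : nat) (pi : R -> config) (v : V) (t : R) (t' : R) : Prop :=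
  0 <= t' /\ t' <= t /\ exists i, Nat.lt i k /\ pi t' i = PNode v.

Definition tau (k : nat) (pi : R -> config) (v : V) (t : R) : R :=
  match excluded_middle_informative (exists t', visit_times k pi v t t') with
  | left _ => real (Lub_Rbar (visit_times k pi v t))
  | right _ => 0
  end.

Definition latency (k : nat) (pi : R -> config) (v : V) (t : R) : R :=
  t - tau k pi v t.

Variable phi : V -> R.

(* M^pi(t) = max_v phi(v) L_v(t)  (all terms are >= 0). *)
Definition Mcost (k : nat) (pi : R -> config) (t : R) : R :=
  List.fold_right Rmax 0 (List.map (fun v => phi v * latency k pi v t) (enum V)).

(* J_T for T in [0,oo]: sup_{t >= T} M(t) for finite T,
   limsup_{t -> oo} M(t) = inf_{s >= 0} sup_{t >= s} M(t) for T = oo. *)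
Definition sup_from (k : nat) (pi : R -> config) (s : R) : Rbar :=
  Lub_Rbar (fun x => exists t, s <= t /\ x = Mcost k pi t).

Definition Jcost (T : Rbar) (k : nat) (pi : R -> config) : Rbar :=
  match T with
  | Finite r => sup_from k pi r
  | _ => Rbar_glb (fun y => exists s, 0 <= s /\ y = sup_from k pi s)
  end.

End MetricGraph.

From Pilot Require Import Defs.
From Stdlib Require Import Reals Lra Lia ZArith Classical ClassicalEpsilon.
From Stdlib Require Import FunctionalExtensionality PropExtensionality.
From mathcomp Require Import ssreflect ssrfun ssrbool eqtype fintype finfun ssrnat.
From Coquelicot Require Import Coquelicot.

(* Beyond some time s0 the cost of pi is at most B, within dtol/2 of J_T(pi), so every
   latency is below some C.  Sample pi at the times s0 + n C: up to a tolerance del, the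
   edge and offset of each robot and every latency take finitely many values, so two
   samples a < b agree up to del.  The periodic strategy follows pi until b, then forever
   moves each robot in time del from its position at b back to its position at a (the same
   node, or nearby on the same edge) and replays pi on [a, b].  Since the latencies at a and
   b agree up to del and b - a exceeds every latency, each latency of the loop exceeds some
   latency of pi after s0 by at most 3 del, hence the cost by at most 3 del max phi. *)

Set Implicit Arguments.
Unset Strict Implicit.
Local Open Scope list_scope.
Local Open Scope R_scope.

Definition tag_of {V E : finType} {A : E -> R} (p : point V A) : V + E :=
  match p with PNode v => inl v | PEdge e _ _ => inr e end.

Definition offset {V E : finType} {A : E -> R} (p : point V A) : R :=
  match p with PNode _ => 0 | PEdge _ s _ => s end.

Section GraphMetric.
Variables (V E : finType) (src dst : E -> V) (A : E -> R).
Hypothesis HA : forall e, 0 < A e.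
Hypothesis Hconn : connected_graph src dst.

Local Notation point := (point V A).
Local Notation walk := (is_walk src dst).
Local Notation route := (@route_length V E src dst A).
Local Notation d := (@Defs.dist V E src dst A).

Lemma walk_cat x y z w1 w2 : walk x y w1 -> walk y z w2 -> walk x z (w1 ++ w2).
Proof.
  revert x; induction w1 as [|e w IH]; intros x H1 H2; simpl in *.
  - by subst.
  - destruct H1 as [[? H]|[? H]]; [left|right]; split; auto.
Qed.

Lemma walk_length_cat w1 w2 : walk_length A (w1 ++ w2) = walk_length A w1 + walk_length A w2.
Proof. induction w1; simpl; [lra|rewrite IHw1; lra]. Qed.

Lemma walk_length_ge0 w : 0 <= walk_length A w.
Proof. induction w as [|e w IH]; simpl; [lra|have := HA e; lra]. Qed.

Lemma ends_ge0 (p : point) x a : List.In (x, a) (ends src dst p) -> 0 <= a.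
Proof.
  destruct p as [v|e s Hs]; simpl.
  - by intros [[= _ <-]|[]]; lra.
  - by intros [[= _ <-]|[[= _ <-]|[]]]; lra.
Qed.

Lemma route_length_ge0 p q l : route p q l -> 0 <= l.
Proof.
  intros [(e&s&s'&_&_&_&_&->)|(x&a&y&b&w&Ha&Hb&_&->)]; first exact: Rabs_pos.
  have := ends_ge0 Ha; have := ends_ge0 Hb; have := walk_length_ge0 w; lra.
Qed.

Lemma route_length_exists p q : exists l, route p q l.
Proof.
  have [x [a Ha]] : exists x a, List.In (x, a) (ends src dst p)
    by destruct p; do 2 eexists; left.
  have [y [b Hb]] : exists y b, List.In (y, b) (ends src dst q)
    by destruct q; do 2 eexists; left.
  destruct (Hconn x y) as [w Hw].
  exists (a + walk_length A w + b); right; exists x, a, y, b, w; auto.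
Qed.

Lemma dist_glbE p q : Glb_Rbar (route p q) = Finite (d p q).
Proof.
  destruct (Glb_Rbar_correct (route p q)) as [Hlb Hg].
  destruct (route_length_exists p q) as [l Hl].
  have H0 : Rbar_le (Finite 0) (Glb_Rbar (route p q)).
  { apply Hg; intros x Hx; exact: route_length_ge0 Hx. }
  have H1 := Hlb l Hl.
  rewrite /Defs.dist; destruct (Glb_Rbar (route p q)); simpl in *; tauto.
Qed.

Lemma dist_le_route p q l : route p q l -> d p q <= l.
Proof.
  intros Hl; have := proj1 (Glb_Rbar_correct (route p q)) l Hl.
  by rewrite dist_glbE.
Qed.

Lemma route_near_dist p q eps : 0 < eps -> exists l, route p q l /\ l < d p q + eps.
Proof.
  intros He; apply NNPP; intros Hn.
  have : Rbar_le (Finite (d p q + eps)) (Glb_Rbar (route p q)).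
  { apply (Glb_Rbar_correct (route p q)); intros x Hx; simpl.
    apply Rnot_lt_le; intros Hlt; apply Hn; exists x; auto. }
  rewrite dist_glbE; simpl; lra.
Qed.

Lemma ends_edge_move e s s' (Hs : 0 < s < A e) (Hs' : 0 < s' < A e) y b :
  List.In (y, b) (ends src dst (PEdge V Hs)) ->
  exists b', List.In (y, b') (ends src dst (PEdge V Hs')) /\ b' <= Rabs (s' - s) + b.
Proof.
  have := Rle_abs (s' - s); have := Rle_abs (s - s'); rewrite (Rabs_minus_sym s s').
  simpl; intros H1 H2 [[= <- <-]|[[= <- <-]|[]]].
  - exists s'; split; [left|]; auto; lra.
  - exists (A e - s'); split; [right; left|]; auto; lra.
Qed.

Lemma ends_connect (q : point) y b y' b' :
  List.In (y, b) (ends src dst q) -> List.In (y', b') (ends src dst q) ->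
  exists w, walk y y' w /\ walk_length A w <= b + b'.
Proof.
  destruct q as [v|e s Hs]; simpl.
  - intros [[= <- <-]|[]] [[= <- <-]|[]]; exists nil; simpl; split; auto; lra.
  - intros [[= <- <-]|[[= <- <-]|[]]] [[= <- <-]|[[= <- <-]|[]]];
      [exists nil|exists (e :: nil)|exists (e :: nil)|exists nil];
      simpl; (split; [auto|lra]).
Qed.

Lemma route_length_trans p q r l1 l2 : route p q l1 -> route q r l2 ->
  exists l, route p r l /\ l <= l1 + l2.
Proof.
  intros [(e&s1&s&Hs1&Hs&->&Eq&->)|(x&a&y&b&w1&Ha&Hb&Hw1&->)]
         [(e'&s'&s2&Hs'&Hs2&Eq'&->&->)|(y'&b'&z&c&w2&Hb'&Hc&Hw2&->)].
  - subst q; move: (f_equal tag_of Eq') (f_equal offset Eq') => /= [He] Hss; subst e' s'.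
    exists (Rabs (s1 - s2)); split; first by left; exists e, s1, s2, Hs1, Hs2.
    have := Rabs_triang (s1 - s) (s - s2).
    replace (s1 - s + (s - s2)) with (s1 - s2) by ring; lra.
  - subst q; destruct (ends_edge_move Hs1 Hb') as (b''&Hb''&Hle).
    exists (b'' + walk_length A w2 + c); split; first by right; exists y', b'', z, c, w2.
    lra.
  - subst q; destruct (ends_edge_move Hs2 Hb) as (b''&Hb''&Hle).
    exists (a + walk_length A w1 + b''); split; first by right; exists x, a, y, b'', w1.
    rewrite Rabs_minus_sym in Hle; lra.
  - destruct (ends_connect Hb Hb') as (w&Hw&Hwl).
    exists (a + walk_length A (w1 ++ w ++ w2) + c); split.
    + right; exists x, a, z, c, (w1 ++ w ++ w2); do 3 (split; auto).
      exact: walk_cat Hw1 (walk_cat Hw Hw2).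
    + rewrite !walk_length_cat; lra.
Qed.

Lemma dist_triangle p q r : d p r <= d p q + d q r.
Proof.
  apply Rnot_lt_le; intros Hlt.
  set eps := (d p r - d p q - d q r) / 2.
  have He : 0 < eps by rewrite /eps; lra.
  destruct (route_near_dist p q He) as (l1&H1&H1').
  destruct (route_near_dist q r He) as (l2&H2&H2').
  destruct (route_length_trans H1 H2) as (l&Hl&Hl').
  have := dist_le_route Hl; rewrite /eps in H1' H2'; lra.
Qed.

Lemma dist_edge_le e s s' (Hs : 0 < s < A e) (Hs' : 0 < s' < A e) :
  d (PEdge V Hs) (PEdge V Hs') <= Rabs (s - s').
Proof. by apply dist_le_route; left; exists e, s, s', Hs, Hs'. Qed.

Lemma dist_refl_le0 p : d p p <= 0.
Proof.
  destruct p as [v|e s Hs].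
  - apply dist_le_route; right; exists v, 0, v, 0, nil; simpl; repeat split; auto; lra.
  - by have := dist_edge_le Hs Hs; rewrite Rminus_diag Rabs_R0.
Qed.

End GraphMetric.

Lemma Lub_Rbar_bounded (S : R -> Prop) t : (exists x, S x) -> (forall x, S x -> x <= t) ->
  (forall x, S x -> x <= real (Lub_Rbar S)) /\ real (Lub_Rbar S) <= t /\
  (forall eta, 0 < eta -> exists x, S x /\ real (Lub_Rbar S) - eta < x).
Proof.
  intros [x0 Hx0] Hub.
  destruct (Lub_Rbar_correct S) as [Hu Hl].
  have H1 : Rbar_le (Lub_Rbar S) (Finite t) by apply Hl; intros x Hx; apply Hub.
  have H2 := Hu x0 Hx0.
  destruct (Lub_Rbar S) as [L| |]; simpl in H1, H2 |- *; try tauto.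
  split; [exact: Hu|split; auto].
  intros eta He; apply NNPP; intros Hn.
  have : Rbar_le (Finite L) (Finite (L - eta)).
  { apply Hl; intros x Hx; simpl; apply Rnot_lt_le; intros Hlt; apply Hn; exists x; auto. }
  simpl; lra.
Qed.

Lemma Lub_Rbar_le (S : R -> Prop) c : (forall x, S x -> x <= c) -> Rbar_le (Lub_Rbar S) (Finite c).
Proof. intros H; apply (Lub_Rbar_correct S); exact: H. Qed.

Lemma Lub_Rbar_ge (S : R -> Prop) x : S x -> Rbar_le (Finite x) (Lub_Rbar S).
Proof. intros H; exact: (proj1 (Lub_Rbar_correct S)) x H. Qed.

Lemma fold_Rmax_ge (T : Type) (f : T -> R) l x :
  List.In x l -> f x <= List.fold_right Rmax 0 (List.map f l).
Proof.
  induction l as [|y l IH]; simpl; [tauto|].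
  intros [->|H]; [apply Rmax_l|]; apply: Rle_trans (IH H) (Rmax_r _ _).
Qed.

Lemma fold_Rmax_ge0 (T : Type) (f : T -> R) l : 0 <= List.fold_right Rmax 0 (List.map f l).
Proof. induction l; simpl; [lra|apply: Rle_trans IHl (Rmax_r _ _)]. Qed.

Lemma fold_Rmax_le (T : Type) (f : T -> R) l c : 0 <= c -> (forall x, List.In x l -> f x <= c) ->
  List.fold_right Rmax 0 (List.map f l) <= c.
Proof. intros Hc; induction l as [|y l IH]; simpl; intros H; [lra|apply Rmax_lub; auto]. Qed.

Lemma In_enum (T : finType) (x : T) : List.In x (enum T).
Proof. apply/Iter.In_mem; by rewrite mem_enum. Qed.

Lemma finite_upper_bound (T : finType) (f : T -> R) : exists M, 0 < M /\ forall x, f x <= M.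
Proof.
  exists (List.fold_right Rmax 0 (List.map f (enum T)) + 1); split.
  - have := fold_Rmax_ge0 f (enum T); lra.
  - intros x; have := fold_Rmax_ge f (In_enum x); lra.
Qed.

Lemma finite_sequence_repeats (F : finType) (st : nat -> F) :
  exists m n, (m < n)%coq_nat /\ st m = st n.
Proof.
  pose g (o : 'I_#|F|.+1) : F := st o.
  have Hg : ~ injective g by move=> /leq_card; rewrite card_ord ltnn.
  apply NNPP; intros Hn; apply Hg; intros o1 o2 Ho; apply val_inj.
  destruct (Nat.lt_trichotomy o1 o2) as [H|[H|H]]; auto; exfalso; apply Hn.
  - by exists o1, o2.
  - by exists o2, o1.
Qed.

Lemma Int_part_ge0 x : 0 <= x -> (0 <= Int_part x)%Z.
Proof.
  intros Hx; have [_ H] := base_Int_part x.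
  have : (-1 < Int_part x)%Z by apply lt_IZR; lra.
  lia.
Qed.

Definition rem_R (x P : R) : R := x - P * IZR (Int_part (x / P)).

Section RemR.
Variable P : R.
Hypothesis HP : 0 < P.

Lemma rem_R_range x : 0 <= rem_R x P < P.
Proof.
  rewrite /rem_R; have [H1 H2] := base_Int_part (x / P).
  have Hx : x = P * (x / P) by field; lra.
  split; nra.
Qed.

Lemma rem_R_small x : 0 <= x < P -> rem_R x P = x.
Proof.
  intros Hx; rewrite /rem_R -(Int_part_spec (x / P) 0); first by simpl; ring.
  have : x / P < 1 by apply Rmult_lt_reg_r with P; [|rewrite /Rdiv Rmult_assoc Rinv_l]; lra.
  have : 0 <= x / P by apply Rdiv_le_0_compat; lra.
  simpl; lra.
Qed.

Lemma rem_R_shift x : rem_R (x + P) P = rem_R x P.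
Proof.
  rewrite /rem_R (_ : (x + P) / P = x / P + 1); last by field; lra.
  have [H1 H2] := base_Int_part (x / P).
  rewrite -(Int_part_spec (x / P + 1) (Int_part (x / P) + 1)); last by rewrite plus_IZR; lra.
  rewrite plus_IZR; ring.
Qed.

Lemma rem_R_decomp x : 0 <= x -> exists n : nat, x = INR n * P + rem_R x P.
Proof.
  intros Hx; have H0 := Int_part_ge0 (Rdiv_le_0_compat x P Hx HP).
  exists (Z.to_nat (Int_part (x / P))).
  rewrite INR_IZR_INZ Z2Nat.id // /rem_R; ring.
Qed.

End RemR.

(* Meaningful for [0 <= x <= U] only: [inord] sends out-of-range indices to [0]. *)
Definition bucket (h U x : R) : 'I_(Z.to_nat (up (U / h))).+1 :=
  inord (Z.to_nat (Int_part (x / h))).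

Lemma bucket_eq_close h U x y : 0 < h -> 0 <= x <= U -> 0 <= y <= U ->
  bucket h U x = bucket h U y -> Rabs (x - y) < h.
Proof.
  intros Hh Hx Hy Heq.
  have Hcell : forall z, 0 <= z <= U -> (0 <= Int_part (z / h))%Z /\
      (Z.to_nat (Int_part (z / h)) < (Z.to_nat (up (U / h))).+1)%nat.
  { intros z Hz.
    have Hz0 : 0 <= z / h by apply Rdiv_le_0_compat; lra.
    have HzU : z / h <= U / h by apply Rmult_le_compat_r; [left; apply Rinv_0_lt_compat|]; lra.
    have [H1 H2] := base_Int_part (z / h); have [H3 _] := archimed (U / h).
    have := Int_part_ge0 Hz0.
    have : (Int_part (z / h) < up (U / h))%Z by apply lt_IZR; lra.
    intros; split; auto; apply/ltP; lia. }
  have [Hx0 Hx1] := Hcell x Hx; have [Hy0 Hy1] := Hcell y Hy.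
  move: (f_equal (@nat_of_ord _) Heq); rewrite !inordK // => /Z2Nat.inj HI.
  have HI' := HI Hx0 Hy0.
  have [H1 H2] := base_Int_part (x / h); have [H3 H4] := base_Int_part (y / h).
  rewrite HI' in H1 H2.
  have Hxy : Rabs ((x - y) / h) < 1.
  { rewrite (_ : (x - y) / h = x / h - y / h); last by field; lra.
    apply Rabs_def1; lra. }
  rewrite /Rdiv Rabs_mult (Rabs_pos_eq (/ h)) in Hxy; last by left; apply Rinv_0_lt_compat.
  apply (Rmult_lt_reg_r (/ h)); [apply Rinv_0_lt_compat|rewrite Rinv_r]; lra.
Qed.

Section LastVisit.
Variables (V E : finType) (A : E -> R) (k : nat) (f : R -> config V A).

Local Notation visits := (visit_times k f).
Local Notation tau := (tau k f).
Local Notation latency := (latency k f).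

Lemma visit_times_le v t x : visits v t x -> x <= t.
Proof. by intros (_&Hx&_). Qed.

Lemma tau_bounds v t : 0 <= t -> 0 <= tau v t <= t.
Proof.
  intros Ht; rewrite /Defs.tau.
  destruct (excluded_middle_informative _) as [Hex|_]; last lra.
  have [Hmem [Hle _]] := Lub_Rbar_bounded Hex (@visit_times_le v t).
  destruct Hex as [x Hx]; have := Hmem x Hx; destruct Hx as (Hx0&_); lra.
Qed.

Lemma tau_ge_visit v t x : visits v t x -> x <= tau v t.
Proof.
  intros Hx; rewrite /Defs.tau.
  destruct (excluded_middle_informative _) as [Hex|Hn].
  - exact: (proj1 (Lub_Rbar_bounded Hex (@visit_times_le v t))).
  - by exfalso; apply Hn; exists x.
Qed.

Lemma tau_near_visit v t eta : (exists x, visits v t x) -> 0 < eta ->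
  exists x, visits v t x /\ tau v t - eta < x.
Proof.
  intros Hex He; rewrite /Defs.tau.
  destruct (excluded_middle_informative _) as [Hex'|]; last tauto.
  exact: (proj2 (proj2 (Lub_Rbar_bounded Hex' (@visit_times_le v t)))).
Qed.

Lemma tau_no_visit v t : ~ (exists x, visits v t x) -> tau v t = 0.
Proof. by intros Hn; rewrite /Defs.tau; destruct (excluded_middle_informative _). Qed.

Lemma tau_monotone v t t' : 0 <= t' -> t' <= t -> tau v t' <= tau v t.
Proof.
  intros H0 H1; destruct (classic (exists x, visits v t' x)) as [Hex|Hn].
  - apply Rnot_lt_le; intros Hlt.
    have He : 0 < tau v t' - tau v t by lra.
    destruct (tau_near_visit Hex He) as (x&(Hx0&Hx1&Hx2)&Hx).
    have : visits v t x by split; [|split]; auto; lra.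
    move/tau_ge_visit; lra.
  - rewrite (tau_no_visit Hn); have := tau_bounds v (Rle_trans _ _ _ H0 H1); lra.
Qed.

Lemma tau_recent_or_stale v a u eta : a <= u -> 0 < eta ->
  (exists x, visits v u x /\ a <= x /\ tau v u - eta < x) \/ tau v u = tau v a.
Proof.
  intros Hau He; destruct (classic (exists x, visits v u x /\ a <= x /\ tau v u - eta < x))
    as [Hrec|Hstale]; [by left|right].
  have Hiff : visits v u = visits v a.
  { apply functional_extensionality; intros x; apply propositional_extensionality; split.
    - intros (H0&H1&Hx); split; [|split]; auto.
      apply Rnot_lt_le; intros Hxa; apply Hstale.
      have Hex : exists y, visits v u y by exists x; split.
      destruct (tau_near_visit Hex He) as (w&Hw&Hwt).
      destruct (Rlt_dec w a) as [Hwa|Hwa].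
      + have := tau_ge_visit (conj H0 (conj H1 Hx)); exists x; split; [split|split]; auto; lra.
      + exists w; split; [|split]; auto; lra.
    - intros (H0&H1&Hx); split; [|split]; auto; lra. }
  by rewrite /Defs.tau Hiff.
Qed.

Lemma latency_ge0 v t : 0 <= t -> 0 <= latency v t.
Proof. intros Ht; rewrite /Defs.latency; have := tau_bounds v Ht; lra. Qed.

Lemma latency_le_visit v t x i : f x i = PNode A v -> Nat.lt i k -> 0 <= x -> x <= t ->
  latency v t <= t - x.
Proof.
  intros Hx Hi H0 H1; rewrite /Defs.latency.
  have := @tau_ge_visit v t x (conj H0 (conj H1 (ex_intro _ i (conj Hi Hx)))); lra.
Qed.

Lemma latency_grow v t t' : 0 <= t' -> t' <= t -> latency v t <= (t - t') + latency v t'.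
Proof. intros H0 H1; rewrite /Defs.latency; have := tau_monotone v H0 H1; lra. Qed.

End LastVisit.

Lemma latency_ext (V E : finType) (A : E -> R) k (f g : R -> config V A) v t :
  (forall x, 0 <= x <= t -> f x = g x) -> latency k f v t = latency k g v t.
Proof.
  intros Hfg; rewrite /latency /tau.
  have -> : visit_times k f v t = visit_times k g v t; last by [].
  apply functional_extensionality; intros x; apply propositional_extensionality.
  split; intros (H0&H1&i&Hi&Hx); do 2 (split; auto); exists i; split; auto.
  - by rewrite -Hfg.
  - by rewrite Hfg.
Qed.

Section Lipschitz.
Variables (V E : finType) (src dst : E -> V) (A : E -> R).
Hypothesis HA : forall e, 0 < A e.
Hypothesis Hconn : connected_graph src dst.

Local Notation d := (@Defs.dist V E src dst A).

Definition lipschitz_on (g : R -> point V A) (x y : R) : Prop :=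
  forall t t', x <= t <= y -> x <= t' <= y -> d (g t) (g t') <= Rabs (t - t').

Lemma lipschitz_on_cat g x y z : lipschitz_on g x y -> lipschitz_on g y z -> lipschitz_on g x z.
Proof.
  intros H1 H2 t t' Ht Ht'.
  have Htri := @dist_triangle V E src dst A HA Hconn (g t) (g y) (g t').
  have Habs : forall a b c, a <= b <= c \/ c <= b <= a ->
      Rabs (a - c) = Rabs (a - b) + Rabs (b - c)
    by intros a b c Hb; rewrite /Rabs; repeat destruct (Rcase_abs _); lra.
  destruct (Rle_lt_dec t y), (Rle_lt_dec t' y).
  - apply H1; lra.
  - have := H1 t y ltac:(lra) ltac:(lra); have := H2 y t' ltac:(lra) ltac:(lra).
    rewrite (Habs t y t'); lra.
  - have := H2 t y ltac:(lra) ltac:(lra); have := H1 y t' ltac:(lra) ltac:(lra).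
    rewrite (Habs t y t'); lra.
  - apply H2; lra.
Qed.

Lemma lipschitz_on_sub g x y x' y' : x <= x' -> y' <= y ->
  lipschitz_on g x y -> lipschitz_on g x' y'.
Proof. intros Hx Hy H t t' Ht Ht'; apply H; lra. Qed.

Lemma lipschitz_on_shift g x y c : lipschitz_on g x y ->
  (forall t, x <= t <= y -> g (t + c) = g t) -> lipschitz_on g (x + c) (y + c).
Proof.
  intros H Hc t t' Ht Ht'.
  replace t with (t - c + c) by ring; replace t' with (t' - c + c) by ring.
  rewrite !Hc; try lra.
  replace (t - c + c - (t' - c + c)) with ((t - c) - (t' - c)) by ring.
  apply H; lra.
Qed.

Lemma lipschitz_on_periodic g b P : 0 < P -> lipschitz_on g b (b + P) ->
  (forall t, b <= t -> g (t + P) = g t) -> forall y, lipschitz_on g b y.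
Proof.
  intros HP H Hper.
  have Hiter : forall (m : nat) t, b <= t -> g (t + INR m * P) = g t.
  { induction m as [|m IH]; intros t Ht; first by rewrite Rmult_0_l Rplus_0_r.
    rewrite S_INR (_ : t + (INR m + 1) * P = t + INR m * P + P); last ring.
    have Hm := pos_INR m; rewrite Hper; [exact: IH|nra]. }
  have Hn : forall n : nat, lipschitz_on g b (b + INR n * P).
  { induction n as [|n IH].
    - intros t t' Ht Ht'; rewrite (_ : t = b); last (simpl in *; lra).
      rewrite (_ : t' = b); last (simpl in *; lra).
      rewrite Rminus_diag Rabs_R0; exact: (@dist_refl_le0 V E src dst A HA Hconn).
    - apply lipschitz_on_cat with (b + INR n * P); auto.
      rewrite S_INR (_ : b + (INR n + 1) * P = b + P + INR n * P); last ring.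
      apply lipschitz_on_shift; auto; intros t Ht; apply Hiter; lra. }
  intros y; destruct (INR_archimed P (y - b) HP) as [n Hlarge].
  apply lipschitz_on_sub with b (b + INR n * P); auto; lra.
Qed.

End Lipschitz.

Section LoopStrategy.
Variables (V E : finType) (src dst : E -> V) (A : E -> R).
Hypothesis HA : forall e, 0 < A e.
Hypothesis Hconn : connected_graph src dst.
Variables (k : nat) (pi : R -> config V A).
Hypothesis Hpi : feasible src dst k pi.

Local Notation point := (point V A).
Local Notation d := (@Defs.dist V E src dst A).

Lemma feasible_robot_lipschitz i : Nat.lt i k -> forall t t', 0 <= t -> 0 <= t' ->
  d (pi t i) (pi t' i) <= Rabs (t - t').
Proof.
  intros Hi t t' Ht Ht'; apply: Rle_trans (proj2 Hpi t t' Ht Ht').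
  apply (fold_Rmax_ge (fun j => d (pi t j) (pi t' j))), List.in_seq; lia.
Qed.

Lemma feasible_of_robot_lipschitz (g : R -> config V A) :
  (forall i, Nat.lt i k -> forall t t', 0 <= t -> 0 <= t' ->
     d (g t i) (g t' i) <= Rabs (t - t')) ->
  feasible src dst k g.
Proof.
  intros H.
  have Hdk : forall t t', 0 <= t -> 0 <= t' -> dk src dst k (g t) (g t') <= Rabs (t - t').
  { intros t t' Ht Ht'; apply fold_Rmax_le; first exact: Rabs_pos.
    intros j Hj; apply List.in_seq in Hj; apply H; auto; lia. }
  split; auto; intros t Ht eps He; exists eps; split; auto.
  intros t' Ht' Hlt; have := Hdk t t' Ht Ht'; rewrite Rabs_minus_sym; lra.
Qed.

(* Junk value [src e] when [s] is not in [(0, A e)]. *)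
Definition edge_point (e : E) (s : R) : point :=
  match Rlt_dec 0 s, Rlt_dec s (A e) with
  | left H1, left H2 => PEdge V (conj H1 H2)
  | _, _ => PNode A (src e)
  end.

Lemma edge_pointE e s (Hs : 0 < s < A e) : edge_point e s = PEdge V Hs.
Proof.
  unfold edge_point; destruct Hs as [H1 H2].
  case: (Rlt_dec 0 s) => [H1'|]; last by intros; exfalso; lra.
  case: (Rlt_dec s (A e)) => [H2'|]; last by intros; exfalso; lra.
  f_equal; apply proof_irrelevance.
Qed.

Section Loop.
Variables (a b del : R).
Hypothesis Ha0 : 0 <= a.
Hypothesis Hab : a < b.
Hypothesis Hdel : 0 < del.
Hypothesis Htag : forall i, Nat.lt i k -> tag_of (pi a i) = tag_of (pi b i).
Hypothesis Hoffset : forall i, Nat.lt i k -> Rabs (offset (pi a i) - offset (pi b i)) < del.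
Hypothesis Hlat : forall v, latency k pi v b < latency k pi v a + del.
Hypothesis Hlat_b : forall v, latency k pi v b < b - a.

(* During [[0, del]] each robot moves linearly from its position at time [b] back to
   its position at time [a]; this is possible because both lie on the same node or edge. *)
Definition bridge (i : nat) (r : R) : point :=
  match pi b i with
  | PNode v => PNode A v
  | PEdge e sb _ => edge_point e (sb + (offset (pi a i) - sb) * (r / del))
  end.

Definition period := b - a + del.

Definition loop_phase (r : R) : config V A :=
  fun i => if Rlt_dec r del then bridge i r else pi (a + r - del) i.

(* Follow [pi] up to time [b], then repeat forever: bridge to [pi a], replay [pi] on [[a, b]]. *)
Definition loop (t : R) : config V A :=
  if Rle_dec t b then pi t else loop_phase (rem_R (t - b) period).

Lemma period_gt_del : del < period.
Proof. rewrite /period; lra. Qed.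

Lemma period_gt0 : 0 < period.
Proof. exact: Rlt_trans Hdel period_gt_del. Qed.

Lemma bridge0 i : bridge i 0 = pi b i.
Proof.
  rewrite /bridge; destruct (pi b i) as [v|e s Hs]; auto.
  rewrite /Rdiv Rmult_0_l Rmult_0_r Rplus_0_r; exact: edge_pointE.
Qed.

Lemma bridge_cases i : Nat.lt i k ->
  (exists v, pi b i = PNode A v /\ pi a i = PNode A v /\ forall r, bridge i r = PNode A v) \/
  (exists e sa sb (Ha : 0 < sa < A e) (Hb : 0 < sb < A e),
     pi a i = PEdge V Ha /\ pi b i = PEdge V Hb /\ Rabs (sa - sb) < del /\
     forall r, bridge i r = edge_point e (sb + (sa - sb) * (r / del))).
Proof.
  intros Hi; have Ht := Htag Hi; have Hp := Hoffset Hi; rewrite /bridge.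
  destruct (pi b i) as [v|e sb Hsb]; destruct (pi a i) as [v'|e' sa Hsa];
    simpl in Ht; try discriminate; injection Ht as Ht; subst.
  - by left; exists v.
  - by right; exists e, sa, sb, Hsa, Hsb.
Qed.

Lemma bridge_del i : Nat.lt i k -> bridge i del = pi a i.
Proof.
  intros Hi; destruct (bridge_cases Hi) as [(v&_&Ha&Hr)|(e&sa&sb&Hsa&Hsb&Ea&_&_&Hr)].
  - by rewrite Hr Ha.
  - rewrite Hr Ea (_ : sb + (sa - sb) * (del / del) = sa); first exact: edge_pointE.
    field; lra.
Qed.

Lemma bridge_lipschitz i r r' : Nat.lt i k -> 0 <= r <= del -> 0 <= r' <= del ->
  d (bridge i r) (bridge i r') <= Rabs (r - r').
Proof.
  intros Hi Hr Hr'.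
  destruct (bridge_cases Hi) as [(v&_&_&Hbr)|(e&sa&sb&Hsa&Hsb&_&_&Hd&Hbr)].
  - rewrite !Hbr; have := @dist_refl_le0 V E src dst A HA Hconn (PNode A v).
    have := Rabs_pos (r - r'); lra.
  - have Hin : forall x, 0 <= x <= del -> 0 < sb + (sa - sb) * (x / del) < A e.
    { intros x Hx; set l := x / del.
      have Hl : 0 <= l <= 1.
      { rewrite /l; split; first by apply Rdiv_le_0_compat; lra.
        apply Rmult_le_reg_r with del; [lra|rewrite /Rdiv Rmult_assoc Rinv_l; lra]. }
      destruct Hsa, Hsb, (Rle_lt_dec sa sb); split; nra. }
    rewrite !Hbr (edge_pointE (Hin r Hr)) (edge_pointE (Hin r' Hr')).
    eapply Rle_trans; first exact: (@dist_edge_le V E src dst A HA Hconn).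
    replace (sb + (sa - sb) * (r / del) - (sb + (sa - sb) * (r' / del)))
      with ((sa - sb) / del * (r - r')) by (field; lra).
    rewrite Rabs_mult Rabs_div; last lra.
    rewrite (Rabs_pos_eq del); last lra.
    have : Rabs (sa - sb) / del <= 1
      by apply Rmult_le_reg_r with del; [lra|rewrite /Rdiv Rmult_assoc Rinv_l; lra].
    have := Rabs_pos (r - r'); nra.
Qed.

Lemma loop_prefix t : t <= b -> loop t = pi t.
Proof. by intros Ht; rewrite /loop; destruct (Rle_dec t b). Qed.

Lemma loop_shift t : b <= t -> loop (t + period) = loop t.
Proof.
  intros Ht; have HP := period_gt_del.
  rewrite /loop (_ : t + period - b = t - b + period); last ring.
  rewrite rem_R_shift; last lra.
  case: (Rle_dec (t + period) b) => [H|_ /=]; first lra.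
  case: (Rle_dec t b) => [Htb|//] /=.
  apply functional_extensionality => i.
  rewrite (_ : t - b = 0) ?rem_R_small /loop_phase; try lra.
  case: (Rlt_dec 0 del) => [_ /=|H]; last lra.
  by rewrite bridge0 (_ : t = b); last lra.
Qed.

Lemma loop_iter (n : nat) t : b <= t -> loop (t + INR n * period) = loop t.
Proof.
  have HP := period_gt_del; induction n as [|n IH]; intros Ht.
  - by rewrite Rmult_0_l Rplus_0_r.
  - rewrite S_INR (_ : t + (INR n + 1) * period = t + INR n * period + period); last ring.
    have Hn := pos_INR n; rewrite loop_shift; [exact: IH|nra].
Qed.

Lemma loop_first_period t i : b <= t <= b + period ->
  loop t i = if Rlt_dec (t - b) del then bridge i (t - b) else pi (t - period) i.
Proof.
  intros Ht; have HP := period_gt_del.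
  destruct (Req_dec t (b + period)) as [->|Hne].
  - rewrite loop_shift ?loop_prefix; try lra.
    destruct (Rlt_dec (b + period - b) del); first lra.
    by rewrite Rplus_minus_r.
  - destruct (Req_dec t b) as [->|Hne'].
    + rewrite loop_prefix ?Rminus_diag ?bridge0; last lra.
      by destruct (Rlt_dec 0 del); last lra.
    + rewrite /loop; destruct (Rle_dec t b); first lra.
      rewrite rem_R_small /loop_phase; try lra.
      destruct (Rlt_dec (t - b) del); auto.
      by rewrite /period (_ : a + (t - b) - del = t - (b - a + del)); last ring.
Qed.

Lemma loop_replay (n : nat) w i : a <= w <= b -> loop (w + INR n * period) i = pi w i.
Proof.
  intros Hw; have HP := period_gt_del; destruct n as [|n].
  - by rewrite Rmult_0_l Rplus_0_r loop_prefix; last lra.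
  - rewrite S_INR (_ : w + (INR n + 1) * period = w + period + INR n * period); last ring.
    rewrite loop_iter; last (unfold period in *; lra).
    rewrite loop_first_period; last (unfold period in *; lra).
    destruct (Rlt_dec (w + period - b) del) as [Hlt|Hge]; first (unfold period in *; lra).
    by rewrite Rplus_minus_r.
Qed.

Lemma loop_robot_lipschitz i : Nat.lt i k -> forall t t', 0 <= t -> 0 <= t' ->
  d (loop t i) (loop t' i) <= Rabs (t - t').
Proof.
  intros Hi; have HP := period_gt_del; set g := fun t => loop t i.
  have Lprefix : lipschitz_on src dst g 0 b.
  { intros t t' Ht Ht'; rewrite /g !loop_prefix; try lra.
    apply feasible_robot_lipschitz; auto; lra. }
  have Lbridge : lipschitz_on src dst g b (b + del).
  { have Hg : forall t, b <= t <= b + del -> g t = bridge i (t - b).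
    { intros t Ht; rewrite /g loop_first_period; last lra.
      case: (Rlt_dec (t - b) del) => [//|Hge /=].
      rewrite (_ : t - b = del) ?bridge_del //; last lra.
      by rewrite /period (_ : t - (b - a + del) = a); last lra. }
    intros t t' Ht Ht'; rewrite !Hg //.
    replace (t - t') with ((t - b) - (t' - b)) by ring.
    apply bridge_lipschitz; auto; lra. }
  have Lreplay : lipschitz_on src dst g (b + del) (b + period).
  { have Hg : forall t, b + del <= t <= b + period -> g t = pi (t - period) i.
    { intros t Ht; rewrite /g loop_first_period; last lra.
      by case: (Rlt_dec (t - b) del) => [Hlt|//]; first lra. }
    intros t t' Ht Ht'; rewrite !Hg //.
    replace (t - t') with ((t - period) - (t' - period)) by ring.
    apply feasible_robot_lipschitz; auto; unfold period in *; lra. }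
  have Lperiodic := lipschitz_on_periodic HA Hconn period_gt0
    (lipschitz_on_cat HA Hconn Lbridge Lreplay)
    (fun t Ht => f_equal (fun c => c i) (loop_shift Ht)).
  intros t t' Ht Ht'.
  apply (lipschitz_on_cat HA Hconn Lprefix (Lperiodic (Rmax t t')));
    have := Rmax_l t t'; have := Rmax_r t t'; lra.
Qed.

Lemma loop_feasible : feasible src dst k loop.
Proof. exact: feasible_of_robot_lipschitz loop_robot_lipschitz. Qed.

Lemma loop_periodic : periodic k loop.
Proof.
  have HP := period_gt_del; exists b, period; do 2 (split; first lra).
  intros t Ht i _; by rewrite loop_shift; last lra.
Qed.

Lemma loop_latency_prefix v t : 0 <= t -> t <= b -> latency k loop v t = latency k pi v t.
Proof. intros Ht0 Htb; apply latency_ext; intros x Hx; apply loop_prefix; lra. Qed.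

Lemma loop_latency_period_end (n : nat) v :
  latency k loop v (b + INR n * period) <= latency k pi v b + del.
Proof.
  have HP := period_gt_del; have Hn := pos_INR n; have Hl := Hlat_b v.
  have Hex : exists x, visit_times k pi v b x.
  { apply NNPP => Hno; move: Hl; rewrite /latency (tau_no_visit Hno); lra. }
  rewrite /latency in Hl |- *.
  have Heta : 0 < Rmin del (tau k pi v b - a) by apply Rmin_glb_lt; lra.
  destruct (tau_near_visit Hex Heta) as (x&(Hx0&Hxb&i&Hi&Hx)&Hxt).
  have := Rmin_l del (tau k pi v b - a); have := Rmin_r del (tau k pi v b - a) => Hm2 Hm1.
  have Hvisit : loop (x + INR n * period) i = PNode A v by rewrite loop_replay //; lra.
  have : latency k loop v (b + INR n * period) <= b + INR n * period - (x + INR n * period)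
    by apply: (latency_le_visit Hvisit Hi); nra.
  rewrite /latency; lra.
Qed.

Lemma loop_latency_replay (n : nat) u v : a <= u <= b ->
  latency k loop v (u + INR (S n) * period) <= latency k pi v u + 3 * del.
Proof.
  intros Hu; have HP := period_gt_del; have Hn := pos_INR n; rewrite S_INR.
  destruct (tau_recent_or_stale k pi v (proj1 Hu) Hdel)
    as [(x&(Hx0&Hxu&i&Hi&Hx)&Hxa&Hxt)|Hstale].
  - have Hvisit : loop (x + INR (S n) * period) i = PNode A v by rewrite loop_replay //; lra.
    rewrite S_INR in Hvisit.
    have : latency k loop v (u + (INR n + 1) * period) <= u - x
      by apply: Rle_trans (latency_le_visit Hvisit Hi _ _) _; nra.
    rewrite /latency; lra.
  - have Hgrow := latency_grow k loop v (t := u + (INR n + 1) * period) (t' := b + INR n * period)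
      ltac:(nra) ltac:(unfold period in *; nra).
    have := loop_latency_period_end n v; have := Hlat v.
    move: Hgrow; rewrite /latency Hstale /period; lra.
Qed.

Lemma loop_latency_le v t : 0 <= t ->
  exists u, Rmin a t <= u /\ latency k loop v t <= latency k pi v u + 3 * del.
Proof.
  intros Ht; have HP := period_gt_del.
  destruct (Rle_dec t b) as [Htb|Htb].
  - exists t; split; first exact: Rmin_r.
    rewrite loop_latency_prefix //; lra.
  - have [n Hn] := rem_R_decomp period_gt0 (Rlt_le _ _ (Rlt_Rminus _ _ (Rnot_le_lt _ _ Htb))).
    have := rem_R_range period_gt0 (t - b).
    set r := rem_R (t - b) period in Hn |- * => Hr.
    have HnP := pos_INR n; have Hmin := Rmin_l a t.
    destruct (Rlt_dec r del) as [Hrd|Hrd].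
    + exists b; split; first lra.
      have := latency_grow k loop v (t := t) (t' := b + INR n * period) ltac:(nra) ltac:(lra).
      have := loop_latency_period_end n v; lra.
    + exists (a + r - del); split; first lra.
      rewrite (_ : t = a + r - del + INR (S n) * period);
        last (rewrite S_INR; unfold period in *; lra).
      apply loop_latency_replay; unfold period in *; lra.
Qed.

End Loop.
End LoopStrategy.

Section Cost.
Variables (V E : finType) (A : E -> R) (phi : V -> R) (k : nat).

Lemma Mcost_ge0 (f : R -> config V A) t : 0 <= Mcost phi k f t.
Proof. exact: fold_Rmax_ge0. Qed.

Lemma Mcost_ge_term (f : R -> config V A) t v : phi v * latency k f v t <= Mcost phi k f t.
Proof. exact: (fold_Rmax_ge (fun v => phi v * latency k f v t) (In_enum v)). Qed.

Lemma Mcost_le (f : R -> config V A) t c :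
  0 <= c -> (forall v, phi v * latency k f v t <= c) -> Mcost phi k f t <= c.
Proof. intros Hc H; apply fold_Rmax_le; auto. Qed.

Lemma latency_bounded_of_Mcost (f : R -> config V A) s0 B :
  (forall v, 0 < phi v) -> 0 <= s0 -> (forall t, s0 <= t -> Mcost phi k f t <= B) ->
  exists C, 0 < C /\ forall t, s0 <= t -> forall v, 0 <= latency k f v t < C.
Proof.
  intros Hphi Hs0 HB.
  have HB0 : 0 <= B by have := HB s0 (Rle_refl _); have := Mcost_ge0 f s0; lra.
  have [Minv [HMinv HinvM]] := finite_upper_bound (fun v => / phi v).
  (* [phi v * L_v <= B] bounds every latency by [B / phi v < B * Minv + 1]. *)
  exists (B * Minv + 1); split; first nra.
  intros t Ht v; split; first by apply latency_ge0; lra.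
  have := Mcost_ge_term f t v; have := HB t Ht; have := HinvM v; have := Hphi v.
  intros Hp Hinv H1 H2.
  have : latency k f v t <= B * / phi v.
  { apply (Rmult_le_reg_l (phi v)); auto.
    rewrite -Rmult_assoc (Rmult_comm _ B) Rmult_assoc Rinv_r; lra. }
  nra.
Qed.

Lemma sup_from_ge (f : R -> config V A) s t :
  s <= t -> Rbar_le (Finite (Mcost phi k f t)) (sup_from phi k f s).
Proof. by intros H; apply Lub_Rbar_ge; exists t. Qed.

Lemma sup_from_le (f : R -> config V A) s c :
  (forall t, s <= t -> Mcost phi k f t <= c) -> Rbar_le (sup_from phi k f s) (Finite c).
Proof. intros H; apply Lub_Rbar_le; intros x [t [Ht ->]]; auto. Qed.

Lemma sup_from_finite (f : R -> config V A) s : Rbar_lt (sup_from phi k f s) p_infty ->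
  exists B, sup_from phi k f s = Finite B /\ forall t, s <= t -> Mcost phi k f t <= B.
Proof.
  intros H; have H0 := sup_from_ge f (Rle_refl s).
  destruct (sup_from phi k f s) as [B| |] eqn:EB; simpl in H, H0; try tauto.
  exists B; split; auto; intros t Ht; have := sup_from_ge f Ht; by rewrite EB.
Qed.

Lemma Jcost_le_tail T (g : R -> config V A) s0 c :
  0 <= s0 -> (forall r, T = Finite r -> s0 = r) -> (forall t, s0 <= t -> Mcost phi k g t <= c) ->
  Rbar_le (Jcost phi T k g) (Finite c).
Proof.
  intros Hs0 HT Hc; destruct T as [r| |]; simpl;
    try (rewrite -(HT r) //; exact: sup_from_le);
    apply: Rbar_le_trans (sup_from_le Hc);
    by apply (proj2_sig (Rbar_ex_glb _)); exists s0.
Qed.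

Lemma Jcost_tail T (f : R -> config V A) eps :
  (T = p_infty \/ exists r, T = Finite r /\ 0 <= r) ->
  Rbar_lt (Jcost phi T k f) p_infty -> 0 < eps ->
  exists s0 B, 0 <= s0 /\ (forall r, T = Finite r -> s0 = r) /\
    (forall t, s0 <= t -> Mcost phi k f t <= B) /\
    Rbar_le (Finite B) (Rbar_plus (Jcost phi T k f) (Finite eps)).
Proof.
  intros [->|[r [-> Hr]]] HJ He; simpl in HJ |- *.
  - set S := fun y => exists s, 0 <= s /\ y = sup_from phi k f s.
    have [Hlb Hglb] : Rbar_is_glb S (Rbar_glb S) := proj2_sig (Rbar_ex_glb S).
    fold S in HJ |- *.
    have H0 : Rbar_le (Finite 0) (Rbar_glb S).
    { apply Hglb; intros y [s [Hs ->]]; apply: Rbar_le_trans (sup_from_ge f (Rle_refl s)).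
      exact: Mcost_ge0. }
    destruct (Rbar_glb S) as [J| |]; simpl in HJ, H0 |- *; try tauto.
    have [s [Hs Hsf]] : exists s, 0 <= s /\ Rbar_lt (sup_from phi k f s) (Finite (J + eps)).
    { apply NNPP; intros Hn.
      have : Rbar_le (Finite (J + eps)) (Finite J).
      { apply Hglb; intros y [s [Hs ->]].
        apply Rbar_not_lt_le; intros Hlt; apply Hn; exists s; auto. }
      simpl; lra. }
    have [B [EB HB]] : exists B, sup_from phi k f s = Finite B /\
        forall t, s <= t -> Mcost phi k f t <= B
      by apply sup_from_finite; destruct (sup_from phi k f s).
    exists s, B; split; [auto|split; [intros r Hr; discriminate Hr|split; auto]].
    by rewrite EB in Hsf; simpl in Hsf; lra.
  - destruct (sup_from_finite HJ) as [B [EB HB]].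
    exists r, B; split; [auto|split; [by intros r' [= <-]|split; auto]].
    by rewrite EB /=; lra.
Qed.

End Cost.

(* Sampling [pi] every [C] time units, the state (node or edge of each robot, its offset and
   every latency, the last two up to [del]) ranges over a finite set, so it repeats. *)
Lemma close_return_times (V E : finType) (A : E -> R) k (pi : R -> config V A) s0 C del :
  0 < C -> 0 < del -> (forall t, s0 <= t -> forall v, 0 <= latency k pi v t < C) ->
  exists a b, s0 <= a /\ a + C <= b /\
    (forall i, Nat.lt i k ->
       tag_of (pi a i) = tag_of (pi b i) /\ Rabs (offset (pi a i) - offset (pi b i)) < del) /\
    (forall v, Rabs (latency k pi v a - latency k pi v b) < del).
Proof.
  intros HC Hdel Hlat.
  have [U [HU HAU]] := finite_upper_bound A.
  have Hoff : forall p : point V A, 0 <= offset p <= U.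
  { intros [v|e s Hs]; simpl; [lra|have := HAU e; lra]. }
  pose tn (n : nat) := s0 + INR n * C.
  have Htn : forall n, s0 <= tn n by intros n; have := pos_INR n; rewrite /tn; nra.
  pose st n := ([ffun i : 'I_k => (tag_of (pi (tn n) i), bucket del U (offset (pi (tn n) i)))],
                [ffun v => bucket del C (latency k pi v (tn n))]).
  have [m [n [Hmn Hst]]] := finite_sequence_repeats st.
  case: Hst => /ffunP Hrobots /ffunP Hlatencies.
  exists (tn m), (tn n); split; [auto|split; [|split]].
  - have : INR m + 1 <= INR n by rewrite -S_INR; apply le_INR; lia.
    rewrite /tn; nra.
  - intros i Hi; have Hik : (i < k)%N by apply/ltP.
    move: (Hrobots (Ordinal Hik)); rewrite !ffunE => -[-> Hbucket].
    split; auto; exact: bucket_eq_close Hdel (Hoff _) (Hoff _) Hbucket.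
  - intros v; move: (Hlatencies v); rewrite !ffunE => Hbucket.
    have := Hlat _ (Htn m) v; have := Hlat _ (Htn n) v => H1 H2.
    apply: bucket_eq_close Hbucket; auto; lra.
Qed.

Lemma periodic_strategy_near (V E : finType) (src dst : E -> V) (A : E -> R) (phi : V -> R)
  (HA : forall e, 0 < A e) (Hphi : forall v, 0 < phi v) (Hconn : connected_graph src dst)
  k (pi : R -> config V A) (Hpi : feasible src dst k pi) s0 B eps :
  0 <= s0 -> 0 < eps -> (forall t, s0 <= t -> Mcost phi k pi t <= B) ->
  exists pihat : R -> config V A, feasible src dst k pihat /\ periodic k pihat /\
    forall t, s0 <= t -> Mcost phi k pihat t <= B + eps.
Proof.
  intros Hs0 He HB.
  have [C [HC Hlat]] := latency_bounded_of_Mcost Hphi Hs0 HB.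
  have [Mphi [HMphi HphiM]] := finite_upper_bound phi.
  set del := eps / (3 * Mphi).
  have Hdel : 0 < del by apply Rdiv_lt_0_compat; lra.
  have Hdel_eps : forall v, phi v * (3 * del) <= eps.
  { intros v; have := HphiM v; have := Hphi v.
    have -> : eps = Mphi * (3 * del) by rewrite /del; field; lra.
    nra. }
  destruct (close_return_times HC Hdel Hlat) as (a&b&Ha&Hab&Hrobots&Hlatc).
  have Ha0 : 0 <= a by lra.
  have Hab' : a < b by lra.
  have Hlat_ab : forall v, latency k pi v b < latency k pi v a + del
    by intros v; have := Rabs_def2 _ _ (Hlatc v); lra.
  have Hlat_b : forall v, latency k pi v b < b - a
    by intros v; have := Hlat b ltac:(lra) v; lra.
  exists (loop src pi a b del); split; [|split].
  - apply (loop_feasible HA Hconn Hpi Ha0 Hab' Hdel); intros i Hi; apply (Hrobots i Hi).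
  - exact: loop_periodic.
  - intros t Ht; apply Mcost_le.
    { have := HB s0 (Rle_refl _); have := Mcost_ge0 phi k pi s0; lra. }
    intros v.
    have [u [Hu Hle]] :=
      loop_latency_le src Ha0 Hab' Hdel Hlat_ab Hlat_b v (Rle_trans _ _ _ Hs0 Ht).
    have Hsu : s0 <= u by apply: Rle_trans Hu; apply Rmin_glb.
    have := Mcost_ge_term phi k pi u v; have := HB u Hsu; have := Hdel_eps v; have := Hphi v.
    nra.
Qed.

Theorem mainTheorem3
  (V E : finType) (src dst : E -> V) (A : E -> R) (phi : V -> R)
  (HA : forall e, 0 < A e) (Hphi : forall v, 0 < phi v)
  (Hconn : connected_graph src dst)
  (k : nat) (Hk : Nat.le 1 k)
  (T : Rbar) (HT : T = p_infty \/ exists r, T = Finite r /\ 0 <= r)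
  (pi : R -> config V A) (Hpi : feasible src dst k pi)
  (HJ : Rbar_lt (Jcost phi T k pi) p_infty)
  (dtol : R) (Hd : 0 < dtol) :
  exists pihat : R -> config V A,
    feasible src dst k pihat /\ periodic k pihat /\
    Rbar_le (Jcost phi T k pihat)
            (Rbar_plus (Jcost phi T k pi) (Finite dtol)).
Proof.
  have Hd2 : 0 < dtol / 2 by lra.
  have [s0 [B [Hs0 [HTs0 [HB HBJ]]]]] := Jcost_tail HT HJ Hd2.
  have [pihat [Hfeas [Hper Hcost]]] :=
    periodic_strategy_near HA Hphi Hconn Hpi Hs0 Hd2 HB.
  exists pihat; split; [|split]; auto.
  apply: Rbar_le_trans (Jcost_le_tail Hs0 HTs0 Hcost) _.
  destruct (Jcost phi T k pi); simpl in HBJ |- *; lra.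
Qed.
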